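(* With $G$, $d$, $G_0$, $X$ and the topology $\tau$ as in the context, let $Y$ be any Polish space with a continuous action of $G$. Then there is a map $\pi:Y\to X$ that is continuous, one-to-one, satisfies $\pi(g\cdot y)=g\cdot\pi(y)$ for all $g\in G$, $y\in Y$, and is open onto its image: for every open $U\subseteq Y$ there is a $\tau$-open $O\subseteq X$ with $U=\{y\in Y:\pi(y)\in O\}$.
   Context: Let $G$ be a Polish group, $d$ a compatible right-invariant metric on $G$ (i.e. $d(g_0h,g_1h)=d(g_0,g_1)$) bounded by $1$, and $G_0$ a countable dense subgroup of $G$. Let $\mathcal L(G,d)$ be the set of functions $f:G\to[0,1]$ with $|f(g_1)-f(g_2)|\le d(g_1,g_2)$ for all $g_1,g_2$. Let $\mathbb Q^{<\mathbb N}$ be the set of finite sequences of rationals; for $s\in\mathbb Q^{<\mathbb N}$ and rationals $a_1,\dots,a_k$, $sa_1\dots a_k$ denotes the sequence $s$ followed by $a_1,\dots,a_k$ (natural numbers are regarded as rationals). Elements of $\mathcal L(G,d)^{\mathbb Q^{<\mathbb N}}$ are families $\vec f=(f_s)_{s\in\mathbb Q^{<\mathbb N}}$, and $G$ acts by $(g\cdot\vec f)_s(g_0)=f_s(g_0g)$. Let $X$ be the set of $\vec f\in\mathcal L(G,d)^{\mathbb Q^{<\mathbb N}}$ such that, writing $t=sq_0q_1q_2\,0\,m\,n$ and $u=sq_0q_1q_2\,1\,m\,n$: (1) for all $s\in\mathbb Q^{<\mathbb N}$, $g_0\in G_0$, $m,n\in\mathbb N$, $q_0,q_1,q_2,\epsilon\in\mathbb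 Q\cap(0,1)$ with $0<q_i\pm\epsilon<1$ ($i=0,1,2$): $f_t(g_0)<q_1-\epsilon$ or $f_s(g_0)\le q_0+\epsilon$; (2) for the same range of parameters: $f_u(g_0)\ge q_2+\epsilon$ or $f_t(g_0)\ge q_1-\epsilon$; (3) for all $s\in\mathbb Q^{<\mathbb N}$, $g_0\in G_0$, $q_0,\epsilon\in\mathbb Q\cap(0,1)$: if $f_s(g_0)<q_0$ then there are $q_1,q_2\in\mathbb Q$, $g_1\in G_0$, $m,n\in\mathbb N$ with $0<q_2<q_1<q_0<1$, $d(g_0,g_1)<\epsilon$, and $f_u(g_1)<q_2$ where $u=sq_0q_1q_2\,1\,m\,n$. The topology $\tau$ on $X$ is the one generated by the subbasis of all sets $\{\vec f\in X: f_s(g_0)<q_0\}$ for $s\in\mathbb Q^{<\mathbb N}$, $g_0\in G_0$, $q_0\in\mathbb Q$. A Polish space is a separable completely metrizable space; a continuous action means the action map $G\times Y\to Y$ is jointly continuous. *)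

From Stdlib Require Import Reals QArith Qcanon Qreals List.
Import ListNotations.
Open Scope R_scope.

Definition is_metric {T : Type} (e : T -> T -> R) : Prop :=
  (forall x y, 0 <= e x y) /\ (forall x, e x x = 0) /\
  (forall x y, e x y = 0 -> x = y) /\ (forall x y, e x y = e y x) /\
  (forall x y z, e x z <= e x y + e y z).

Definition metric_open {T : Type} (e : T -> T -> R) (U : T -> Prop) : Prop :=
  forall x, U x -> exists r, 0 < r /\ forall y, e x y < r -> U y.

Definition same_topology {T : Type} (e e' : T -> T -> R) : Prop :=
  forall U : T -> Prop, metric_open e U <-> metric_open e' U.

Definition countable_set {T : Type} (A : T -> Prop) : Prop :=
  exists f : nat -> option T, forall x, A x -> exists n, f n = Some x.

Definition dense_set {T : Type} (e : T -> T -> R) (A : T -> Prop) : Prop :=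
  forall x r, 0 < r -> exists a, A a /\ e x a < r.

Definition separable {T : Type} (e : T -> T -> R) : Prop :=
  exists A : T -> Prop, countable_set A /\ dense_set e A.

Definition cauchy_seq {T : Type} (e : T -> T -> R) (u : nat -> T) : Prop :=
  forall eps, 0 < eps -> exists N, forall m n, (N <= m)%nat -> (N <= n)%nat ->
    e (u m) (u n) < eps.

Definition converges_to {T : Type} (e : T -> T -> R) (u : nat -> T) (l : T) : Prop :=
  forall eps, 0 < eps -> exists N, forall n, (N <= n)%nat -> e (u n) l < eps.

Definition complete_metric {T : Type} (e : T -> T -> R) : Prop :=
  forall u, cauchy_seq e u -> exists l, converges_to e u l.

Definition polish_topology {T : Type} (e : T -> T -> R) : Prop :=
  is_metric e /\ separable e /\
  exists e' : T -> T -> R, is_metric e' /\ complete_metric e' /\ same_topology e e'.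

Definition is_group {G : Type} (mul : G -> G -> G) (inv : G -> G) (one : G) : Prop :=
  (forall a b c, mul a (mul b c) = mul (mul a b) c) /\
  (forall a, mul one a = a) /\ (forall a, mul a one = a) /\
  (forall a, mul (inv a) a = one) /\ (forall a, mul a (inv a) = one).

Definition topological_group {G : Type} (d : G -> G -> R)
    (mul : G -> G -> G) (inv : G -> G) : Prop :=
  (forall a b eps, 0 < eps -> exists del, 0 < del /\
     forall a' b', d a a' < del -> d b b' < del -> d (mul a b) (mul a' b') < eps) /\
  (forall a eps, 0 < eps -> exists del, 0 < del /\
     forall a', d a a' < del -> d (inv a) (inv a') < eps).

Definition right_invariant {G : Type} (d : G -> G -> R) (mul : G -> G -> G) : Prop :=
  forall g0 g1 h, d (mul g0 h) (mul g1 h) = d g0 g1.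

Definition bounded_by_one {G : Type} (d : G -> G -> R) : Prop :=
  forall g h, d g h <= 1.

Definition subgroup {G : Type} (mul : G -> G -> G) (inv : G -> G) (one : G)
    (H : G -> Prop) : Prop :=
  H one /\ (forall a b, H a -> H b -> H (mul a b)) /\ (forall a, H a -> H (inv a)).

Definition continuous_action {G Y : Type} (d : G -> G -> R) (eY : Y -> Y -> R)
    (mul : G -> G -> G) (one : G) (act : G -> Y -> Y) : Prop :=
  (forall y, act one y = y) /\
  (forall g h y, act (mul g h) y = act g (act h y)) /\
  (forall g y eps, 0 < eps -> exists del, 0 < del /\
     forall g' y', d g g' < del -> eY y y' < del -> eY (act g y) (act g' y') < eps).

Definition qr (q : Qc) : R := Q2R (this q).
Definition natQ (n : nat) : Qc := Q2Qc (inject_Z (Z.of_nat n)).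
Definition Q0 : Qc := Q2Qc 0%Q.
Definition Q1 : Qc := Q2Qc 1%Q.

Definition qfamily (G : Type) := list Qc -> G -> R.

Definition lip1 {G : Type} (d : G -> G -> R) (f : G -> R) : Prop :=
  (forall g, 0 <= f g <= 1) /\ (forall g1 g2, Rabs (f g1 - f g2) <= d g1 g2).

Definition in_unit (q : Qc) : Prop := 0 < qr q < 1.

Definition in_X {G : Type} (d : G -> G -> R) (G0 : G -> Prop) (f : qfamily G) : Prop :=
  (forall s, lip1 d (f s)) /\
  (forall s g0 (m n : nat) q0 q1 q2 eps, G0 g0 ->
     in_unit q0 -> in_unit q1 -> in_unit q2 -> in_unit eps ->
     0 < qr q0 - qr eps < 1 -> 0 < qr q0 + qr eps < 1 ->
     0 < qr q1 - qr eps < 1 -> 0 < qr q1 + qr eps < 1 ->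
     0 < qr q2 - qr eps < 1 -> 0 < qr q2 + qr eps < 1 ->
     f (s ++ [q0; q1; q2; Q0; natQ m; natQ n]) g0 < qr q1 - qr eps \/
     f s g0 <= qr q0 + qr eps) /\
  (forall s g0 (m n : nat) q0 q1 q2 eps, G0 g0 ->
     in_unit q0 -> in_unit q1 -> in_unit q2 -> in_unit eps ->
     0 < qr q0 - qr eps < 1 -> 0 < qr q0 + qr eps < 1 ->
     0 < qr q1 - qr eps < 1 -> 0 < qr q1 + qr eps < 1 ->
     0 < qr q2 - qr eps < 1 -> 0 < qr q2 + qr eps < 1 ->
     f (s ++ [q0; q1; q2; Q1; natQ m; natQ n]) g0 >= qr q2 + qr eps \/
     f (s ++ [q0; q1; q2; Q0; natQ m; natQ n]) g0 >= qr q1 - qr eps) /\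
  (forall s g0 q0 eps, G0 g0 -> in_unit q0 -> in_unit eps ->
     f s g0 < qr q0 ->
     exists q1 q2 g1 (m n : nat),
       0 < qr q2 /\ qr q2 < qr q1 /\ qr q1 < qr q0 /\ qr q0 < 1 /\
       G0 g1 /\ d g0 g1 < qr eps /\
       f (s ++ [q0; q1; q2; Q1; natQ m; natQ n]) g1 < qr q2).

Definition fam_act {G : Type} (mul : G -> G -> G) (g : G) (f : qfamily G) : qfamily G :=
  fun s g0 => f s (mul g0 g).

(* the topology tau on X: generated by the subbasic sets
   {f in X : f_s(g0) < q0}, s a rational sequence, g0 in G0, q0 rational. *)
Definition subbasic_list {G : Type} (f : qfamily G) (l : list (list Qc * G * Qc)) : Prop :=
  forall s g0 q0, In (s, g0, q0) l -> f s g0 < qr q0.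

Definition tau_open {G : Type} (d : G -> G -> R) (G0 : G -> Prop)
    (O : qfamily G -> Prop) : Prop :=
  (forall f, O f -> in_X d G0 f) /\
  forall f, O f -> exists l : list (list Qc * G * Qc),
    (forall s g0 q0, In (s, g0, q0) l -> G0 g0) /\ subbasic_list f l /\
    forall f', in_X d G0 f' -> subbasic_list f' l -> O f'.

From Stdlib Require Import Reals QArith Qcanon Qreals List Cantor Lra Lia.
From Stdlib Require Import Classical FunctionalExtensionality.
Import ListNotations.
Open Scope R_scope.

(* Fix countable dense sequences in G and in Y and attach to every finite
   rational sequence s an open set V_s of Y: singletons code balls around the
   dense points of Y, and from V_s, an element j of the dense sequence of G, a
   small closed ball K ⊆ V_s and a small open ball W one builds a t-child and a
   u-child of V_s.  Put π(y)_s(g) = min(1, inf {d(k,1) : k·g·y ∈ V_s}).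
   Right invariance makes each coordinate 1-Lipschitz, and π is equivariant by
   construction.  As the V_s are open, π(y)_s(g) < q is an open condition on y,
   which is τ-continuity; the balls coded by singletons make π open onto its
   image, hence injective.  Conditions (1)–(3) are built into the children: the
   t-child contains every point that V_s does not reach within q0, the t- and
   u-children cannot be reached within q1 and q2 at the same time, and density
   yields a u-child containing any point that V_s reaches within q0. *)

Section CappedInf.
Variables (T : Type) (e : T -> R) (A : T -> Prop).

Definition capped_lower_bound (c : R) : Prop :=
  c <= 0 \/ (c <= 1 /\ forall k, A k -> c <= e k).

Lemma capped_lower_bound_bound : bound capped_lower_bound.
Proof. exists 1. intros c [Hc | [Hc _]]; lra. Qed.

Lemma capped_lower_bound_inhabited : exists c, capped_lower_bound c.
Proof. exists 0. left. lra. Qed.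

Definition capped_inf : R :=
  proj1_sig (completeness capped_lower_bound
               capped_lower_bound_bound capped_lower_bound_inhabited).

Lemma capped_inf_lub : is_lub capped_lower_bound capped_inf.
Proof. exact (proj2_sig (completeness _ _ _)). Qed.

Lemma capped_inf_ge0 : 0 <= capped_inf.
Proof. apply (proj1 capped_inf_lub). left. lra. Qed.

Lemma capped_inf_le1 : capped_inf <= 1.
Proof. apply (proj2 capped_inf_lub). intros c [Hc | [Hc _]]; lra. Qed.

Lemma capped_inf_ge c : c <= 1 -> (forall k, A k -> c <= e k) -> c <= capped_inf.
Proof. intros Hc Hk. apply (proj1 capped_inf_lub). right. auto. Qed.

Lemma capped_inf_le k : 0 <= e k -> A k -> capped_inf <= e k.
Proof.
  intros He Hk. apply (proj2 capped_inf_lub).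
  intros c [Hc | [_ Hc]]; [lra | auto].
Qed.

Lemma capped_inf_lt c : capped_inf < c -> c <= 1 -> exists k, A k /\ e k < c.
Proof.
  intros Hlt Hc. apply NNPP. intro Hno.
  enough (c <= capped_inf) by lra.
  apply capped_inf_ge; auto.
  intros k Hk. apply Rnot_lt_le. intro Hek. apply Hno. eauto.
Qed.

End CappedInf.

Definition toN (q : Qc) : nat := Z.to_nat (Qnum q).

Lemma toN_natQ m : toN (natQ m) = m.
Proof.
  unfold toN, natQ, Q2Qc. cbn [this].
  rewrite Qred_identity; [apply Znat.Nat2Z.id | apply Z.gcd_1_r].
Qed.

Definition qinv (n : nat) : Qc := Q2Qc (1 # Pos.of_succ_nat n).

Lemma qr_qinv n : qr (qinv n) = / INR (S n).
Proof.
  unfold qr, qinv, Q2Qc. cbn [this].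
  rewrite (Qeq_eqR _ _ (Qred_correct _)). unfold Q2R. cbn [Qnum Qden].
  rewrite Znat.Zpos_P_of_succ_nat, <- Znat.Nat2Z.inj_succ, <- INR_IZR_INZ. lra.
Qed.

Lemma inv_S_pos n : 0 < / INR (S n).
Proof. apply Rinv_0_lt_compat, lt_0_INR. lia. Qed.

Lemma inv_S_le1 n : / INR (S n) <= 1.
Proof.
  rewrite <- Rinv_1. apply Rinv_le_contravar; [lra |].
  rewrite S_INR. pose proof (pos_INR n). lra.
Qed.

Lemma exists_inv_S_lt r : 0 < r -> exists n, / INR (S n) < r.
Proof. intro Hr. destruct (archimed_cor1 r Hr) as [[| n] [Hn Hpos]]; [lia | eauto]. Qed.

Lemma exists_qc_pair_lt r : 0 < r ->
  exists q1 q2 : Qc, 0 < qr q2 /\ qr q2 < qr q1 /\ qr q1 + qr q2 < r.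
Proof.
  intro Hr. destruct (exists_inv_S_lt (r / 2)) as [n Hn]; [lra |].
  exists (qinv n), (qinv (S n)). rewrite !qr_qinv.
  assert (Hlt : / INR (S (S n)) < / INR (S n)).
  { apply Rinv_lt_contravar; [apply Rmult_lt_0_compat; apply lt_0_INR | apply lt_INR]; lia. }
  pose proof (inv_S_pos (S n)). lra.
Qed.

Section Embedding.

Variables (G : Type) (mul : G -> G -> G) (inv : G -> G) (one : G) (d : G -> G -> R).
Variables (Y : Type) (eY : Y -> Y -> R) (act : G -> Y -> Y).

Hypothesis mul_assoc : forall a b c, mul a (mul b c) = mul (mul a b) c.
Hypothesis mul_1l : forall a, mul one a = a.
Hypothesis mul_1r : forall a, mul a one = a.
Hypothesis mul_Vl : forall a, mul (inv a) a = one.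
Hypothesis d_ge0 : forall a b, 0 <= d a b.
Hypothesis d_refl : forall a, d a a = 0.
Hypothesis d_sym : forall a b, d a b = d b a.
Hypothesis d_triangle : forall a b c, d a c <= d a b + d b c.
Hypothesis d_right_invariant : forall a b h, d (mul a h) (mul b h) = d a b.
Hypothesis mul_continuous : forall a b eps, 0 < eps -> exists del, 0 < del /\
  forall a' b', d a a' < del -> d b b' < del -> d (mul a b) (mul a' b') < eps.
Hypothesis eY_ge0 : forall y z, 0 <= eY y z.
Hypothesis eY_refl : forall y, eY y y = 0.
Hypothesis eY_eq : forall y z, eY y z = 0 -> y = z.
Hypothesis eY_sym : forall y z, eY y z = eY z y.
Hypothesis eY_triangle : forall x y z, eY x z <= eY x y + eY y z.
Hypothesis act_one : forall y, act one y = y.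
Hypothesis act_mul : forall g h y, act (mul g h) y = act g (act h y).
Hypothesis act_continuous : forall g y eps, 0 < eps -> exists del, 0 < del /\
  forall g' y', d g g' < del -> eY y y' < del -> eY (act g y) (act g' y') < eps.

Lemma mul_inv_cancel_r a b : mul (mul a (inv b)) b = a.
Proof. rewrite <- mul_assoc, mul_Vl, mul_1r. reflexivity. Qed.

Lemma d_one_of_mul_eq a g b : mul a g = b -> d a one = d b g.
Proof. intros <-. rewrite <- (d_right_invariant a one g), mul_1l. reflexivity. Qed.

Lemma metric_open_act_preimage j U :
  metric_open eY U -> metric_open eY (fun z => U (act j z)).
Proof.
  intros HU z Hz. destruct (HU _ Hz) as [r [Hr Hball]].
  destruct (act_continuous j z r Hr) as [del [Hdel Hc]].
  exists del. split; [exact Hdel |].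
  intros z' Hz'. apply Hball, Hc; [rewrite d_refl |]; assumption.
Qed.

Definition dist_into (V : Y -> Prop) (y : Y) : R :=
  capped_inf G (fun k => d k one) (fun k => V (act k y)).

Lemma dist_into_ge0 V y : 0 <= dist_into V y.
Proof. apply capped_inf_ge0. Qed.

Lemma dist_into_le1 V y : dist_into V y <= 1.
Proof. apply capped_inf_le1. Qed.

Lemma dist_into_le V y k : V (act k y) -> dist_into V y <= d k one.
Proof. exact (capped_inf_le _ (fun k => d k one) (fun k => V (act k y)) k (d_ge0 k one)). Qed.

Lemma dist_into_member V y : V y -> dist_into V y <= 0.
Proof. intro Hy. rewrite <- (d_refl one). apply dist_into_le. rewrite act_one. exact Hy. Qed.

Lemma dist_into_lt V y c : dist_into V y < c -> c <= 1 ->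
  exists k, V (act k y) /\ d k one < c.
Proof. exact (capped_inf_lt _ (fun k => d k one) (fun k => V (act k y)) c). Qed.

Lemma dist_into_act_le V y g1 g2 :
  dist_into V (act g1 y) <= dist_into V (act g2 y) + d g1 g2.
Proof.
  enough (dist_into V (act g1 y) - d g1 g2 <= dist_into V (act g2 y)) by lra.
  apply capped_inf_ge.
  - pose proof (dist_into_le1 V (act g1 y)). pose proof (d_ge0 g1 g2). lra.
  - intros k Hk.
    pose proof (mul_inv_cancel_r (mul k g2) g1) as Hk'.
    assert (Hle : dist_into V (act g1 y) <= d (mul (mul k g2) (inv g1)) one).
    { apply dist_into_le. rewrite <- act_mul, Hk', act_mul. exact Hk. }
    rewrite (d_one_of_mul_eq _ _ _ Hk') in Hle.
    pose proof (d_triangle (mul k g2) g2 g1).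
    rewrite (d_one_of_mul_eq k g2 _ eq_refl), (d_sym g2 g1) in *. lra.
Qed.

Lemma dist_into_act_usc V g y c : metric_open eY V -> dist_into V (act g y) < c ->
  exists r, 0 < r /\ forall y', eY y y' < r -> dist_into V (act g y') < c.
Proof.
  intros HV Hlt. destruct (Rle_dec c 1) as [Hc1 | Hc1].
  - destruct (dist_into_lt _ _ _ Hlt Hc1) as [k [Hk Hdk]].
    rewrite <- act_mul in Hk.
    destruct (metric_open_act_preimage (mul k g) V HV y Hk) as [r [Hr Hball]].
    exists r. split; [exact Hr |]. intros y' Hy'.
    eapply Rle_lt_trans; [| exact Hdk].
    apply dist_into_le. rewrite <- act_mul. apply Hball. exact Hy'.
  - exists 1. split; [lra |]. intros y' _. pose proof (dist_into_le1 V (act g y')). lra.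
Qed.

Definition admissible (V K W : Y -> Prop) (a b : R) (j : G) : Prop :=
  d j one <= a /\ (forall z, K z -> V z) /\
  forall h w, d h one < b -> W w -> K (act j (act h w)).

(* Both children are total: for inadmissible data the t-child is all of Y and
   the u-child is empty. *)
Definition t_set V K W a b j (z : Y) : Prop := admissible V K W a b j -> ~ K (act j z).

Definition u_set V K W a b j (z : Y) : Prop := admissible V K W a b j /\ W z.

Lemma t_set_open V K W a b j :
  metric_open eY (fun z => ~ K z) -> metric_open eY (t_set V K W a b j).
Proof.
  intros HK. destruct (classic (admissible V K W a b j)) as [Hadm | Hadm].
  - intros z Hz. destruct (metric_open_act_preimage j _ HK z (Hz Hadm)) as [r [Hr Hball]].
    exists r. split; [exact Hr |]. intros z' Hz' _. exact (Hball z' Hz').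
  - intros z _. exists 1. split; [lra |]. intros z' _ Hadm'. contradiction.
Qed.

Lemma u_set_open V K W a b j : metric_open eY W -> metric_open eY (u_set V K W a b j).
Proof.
  intros HW z [Hadm Hz]. destruct (HW z Hz) as [r [Hr Hball]].
  exists r. split; [exact Hr |]. intros z' Hz'. split; [exact Hadm | exact (Hball z' Hz')].
Qed.

Lemma t_set_of_far V K W a b j z : a < dist_into V z -> t_set V K W a b j z.
Proof.
  intros Hfar [Hj [HKV _]] HKz.
  pose proof (dist_into_le V z j (HKV _ HKz)). lra.
Qed.

Lemma u_set_t_set_not_both_near V K W a b j z cu ct :
  cu + ct <= b -> cu <= 1 -> ct <= 1 ->
  ~ (dist_into (u_set V K W a b j) z < cu /\ dist_into (t_set V K W a b j) z < ct).
Proof.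
  intros Hb Hcu Hct [Hu Ht].
  destruct (dist_into_lt _ _ _ Hu Hcu) as [h' [[Hadm HW] Hh']].
  destruct (dist_into_lt _ _ _ Ht Hct) as [k [Hk Hdk]].
  apply (Hk Hadm).
  pose proof (mul_inv_cancel_r k h') as Hkh.
  rewrite <- Hkh, act_mul.
  apply (proj2 (proj2 Hadm)); [| exact HW].
  rewrite (d_one_of_mul_eq _ _ _ Hkh).
  pose proof (d_triangle k one h'). rewrite (d_sym one h') in *. lra.
Qed.

Variables (gseq : nat -> G) (yseq : nat -> option Y).

Definition ball_code (n : nat) (z : Y) : Prop :=
  exists w, yseq (fst (of_nat n)) = Some w /\ eY z w < / INR (S (snd (of_nat n))).

Definition cball_code (n : nat) (z : Y) : Prop :=
  exists w, yseq (fst (of_nat n)) = Some w /\ eY z w <= / INR (S (snd (of_nat n))).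

Lemma ball_code_open n : metric_open eY (ball_code n).
Proof.
  intros z [w [Hw Hzw]]. exists (/ INR (S (snd (of_nat n))) - eY z w).
  split; [lra |]. intros z' Hz'. exists w. split; [exact Hw |].
  pose proof (eY_triangle z' z w). rewrite (eY_sym z' z) in *. lra.
Qed.

Lemma cball_code_compl_open n : metric_open eY (fun z => ~ cball_code n z).
Proof.
  intros z Hz. destruct (yseq (fst (of_nat n))) as [w |] eqn:Hw.
  - assert (Hfar : / INR (S (snd (of_nat n))) < eY z w).
    { apply Rnot_le_lt. intro Hle. apply Hz. exists w. auto. }
    exists (eY z w - / INR (S (snd (of_nat n)))). split; [lra |].
    intros z' Hz' [w' [Hw' Hle]]. rewrite Hw in Hw'. injection Hw' as <-.
    pose proof (eY_triangle z z' w). lra.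
  - exists 1. split; [lra |]. intros z' _ [w' [Hw' _]]. congruence.
Qed.

(* Codes are read from the end of the sequence: in s q0 q1 q2 b m n, the entry
   b = 0 or 1 selects the t- or u-child of V_s with bounds q0 and q1 + q2; the
   natural number m codes the pair (translation j, closed ball K) through the
   Cantor pairing, and n codes the open ball W.  A singleton [x] codes a basic
   open ball; every other sequence codes the empty set. *)
Definition decode (q : Qc) : nat * nat := of_nat (toN q).

Fixpoint coded_rev (r : list Qc) : Y -> Prop :=
  match r with
  | [x] => ball_code (toN x)
  | y :: x :: b :: q2 :: q1 :: q0 :: r' =>
      let V := coded_rev r' in
      let K := cball_code (snd (decode x)) in
      let W := ball_code (toN y) in
      let j := gseq (fst (decode x)) in
      if Qc_eq_dec b Q0 then t_set V K W (qr q0) (qr q1 + qr q2) j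
      else if Qc_eq_dec b Q1 then u_set V K W (qr q0) (qr q1 + qr q2) j
      else fun _ => False
  | _ => fun _ => False
  end.

Definition coded (s : list Qc) : Y -> Prop := coded_rev (rev s).

Lemma coded_singleton n : coded [natQ n] = ball_code n.
Proof. unfold coded. simpl. rewrite toN_natQ. reflexivity. Qed.

Lemma coded_t s q0 q1 q2 m n :
  coded (s ++ [q0; q1; q2; Q0; natQ m; natQ n]) =
  t_set (coded s) (cball_code (snd (of_nat m))) (ball_code n)
        (qr q0) (qr q1 + qr q2) (gseq (fst (of_nat m))).
Proof.
  unfold coded. rewrite rev_app_distr. simpl. unfold decode. rewrite !toN_natQ.
  destruct (Qc_eq_dec Q0 Q0); [reflexivity | congruence].
Qed.

Lemma Q1_neq_Q0 : Q1 <> Q0.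
Proof. intro H. apply (f_equal this) in H. discriminate. Qed.

Lemma coded_u s q0 q1 q2 m n :
  coded (s ++ [q0; q1; q2; Q1; natQ m; natQ n]) =
  u_set (coded s) (cball_code (snd (of_nat m))) (ball_code n)
        (qr q0) (qr q1 + qr q2) (gseq (fst (of_nat m))).
Proof.
  unfold coded. rewrite rev_app_distr. simpl. unfold decode. rewrite !toN_natQ.
  destruct (Qc_eq_dec Q1 Q0) as [E | _]; [destruct (Q1_neq_Q0 E) |].
  destruct (Qc_eq_dec Q1 Q1); [reflexivity | congruence].
Qed.

Lemma empty_open : metric_open eY (fun _ => False).
Proof. intros z []. Qed.

Lemma coded_rev_open r : metric_open eY (coded_rev r).
Proof.
  destruct r as [| y [| x [| b [| q2 [| q1 [| q0 r]]]]]]; try apply empty_open.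
  - apply ball_code_open.
  - cbn [coded_rev].
    destruct (Qc_eq_dec b Q0); [apply t_set_open, cball_code_compl_open |].
    destruct (Qc_eq_dec b Q1); [apply u_set_open, ball_code_open | apply empty_open].
Qed.

Lemma coded_open s : metric_open eY (coded s).
Proof. apply coded_rev_open. Qed.

Hypothesis gseq_dense : forall g r, 0 < r -> exists i, d g (gseq i) < r.
Hypothesis yseq_dense : forall y r, 0 < r -> exists c w, yseq c = Some w /\ eY y w < r.

Lemma ball_code_shrinking z r : 0 < r ->
  exists n, ball_code n z /\ forall w, ball_code n w -> eY z w < r.
Proof.
  intro Hr. destruct (exists_inv_S_lt (r / 2)) as [a Ha]; [lra |].
  pose proof (inv_S_pos a).
  destruct (yseq_dense z (/ INR (S a))) as [c [w0 [Hc Hzw0]]]; [assumption |].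
  exists (to_nat (c, a)). unfold ball_code. rewrite cancel_of_to. cbn [fst snd].
  split; [exists w0; auto |].
  intros w [w' [Hw' Hww']]. rewrite Hc in Hw'. injection Hw' as <-.
  pose proof (eY_triangle z w0 w). rewrite (eY_sym w0 w) in *. lra.
Qed.

Lemma cball_code_around p r : 0 < r ->
  exists n eps, 0 < eps /\ (forall w, eY p w < eps -> cball_code n w) /\
    (forall w, cball_code n w -> eY p w < r).
Proof.
  intro Hr. destruct (exists_inv_S_lt (r / 2)) as [a Ha]; [lra |].
  pose proof (inv_S_pos a) as Hpos. set (rho := / INR (S a)) in *.
  destruct (yseq_dense p (rho / 2)) as [c [w0 [Hc Hpw0]]]; [lra |].
  exists (to_nat (c, a)), (rho / 2).
  unfold cball_code. rewrite cancel_of_to. cbn [fst snd]. fold rho.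
  split; [lra | split].
  - intros w Hw. exists w0. split; [exact Hc |].
    pose proof (eY_triangle w p w0). rewrite (eY_sym w p) in *. lra.
  - intros w [w' [Hw' Hww']]. rewrite Hc in Hw'. injection Hw' as <-.
    pose proof (eY_triangle p w0 w). rewrite (eY_sym w0 w) in *. lra.
Qed.

(* j·h·w = (j h j⁻¹)·(j·w), and d(j h j⁻¹, 1) = d(j h, j) by right invariance. *)
Lemma act_conj_near j z eps : 0 < eps -> exists del, 0 < del /\
  forall h w, d h one < del -> eY z w < del -> eY (act j z) (act j (act h w)) < eps.
Proof.
  intro Heps.
  destruct (act_continuous one (act j z) eps Heps) as [del1 [Hdel1 Hc1]].
  destruct (mul_continuous j one del1 Hdel1) as [del0 [Hdel0 Hm]].
  destruct (act_continuous j z del1 Hdel1) as [del2 [Hdel2 Hc2]].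
  exists (Rmin del0 del2). split; [apply Rmin_glb_lt; assumption |].
  intros h w Hh Hw.
  pose proof (Rmin_l del0 del2). pose proof (Rmin_r del0 del2).
  pose proof (mul_inv_cancel_r (mul j h) j) as Hc.
  replace (act j (act h w)) with (act (mul (mul j h) (inv j)) (act j w))
    by (rewrite <- act_mul, Hc, act_mul; reflexivity).
  rewrite <- (act_one (act j z)). apply Hc1.
  - rewrite d_sym, (d_one_of_mul_eq _ _ _ Hc), d_sym, <- (mul_1r j) at 1.
    apply Hm; rewrite ?d_refl, ?(d_sym one h); lra.
  - apply Hc2; rewrite ?d_refl; lra.
Qed.

Lemma u_set_reaching V z q0 : metric_open eY V -> q0 <= 1 -> dist_into V z < q0 ->
  exists i k n (q1 q2 : Qc), 0 < qr q2 /\ qr q2 < qr q1 /\ qr q1 < q0 /\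
    u_set V (cball_code k) (ball_code n) q0 (qr q1 + qr q2) (gseq i) z.
Proof.
  intros HV Hq0 Hz. pose proof (dist_into_ge0 V z).
  destruct (dist_into_lt _ _ _ Hz Hq0) as [g [Hg Hdg]].
  destruct (HV _ Hg) as [eta [Heta Hball]].
  destruct (act_continuous g z (eta / 2)) as [delg [Hdelg Hcg]]; [lra |].
  destruct (gseq_dense g (Rmin delg (q0 - d g one))) as [i Hi]; [apply Rmin_glb_lt; lra |].
  pose proof (Rmin_l delg (q0 - d g one)). pose proof (Rmin_r delg (q0 - d g one)).
  set (j := gseq i) in *.
  assert (Hjz : eY (act g z) (act j z) < eta / 2) by (apply Hcg; rewrite ?eY_refl; lra).
  destruct (cball_code_around (act j z) (eta / 2)) as [k [eps [Heps [HinK HKin]]]]; [lra |].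
  destruct (act_conj_near j z eps Heps) as [del [Hdel Hconj]].
  destruct (ball_code_shrinking z del Hdel) as [n [Hzn Hn]].
  destruct (exists_qc_pair_lt (Rmin q0 del)) as [q1 [q2 [Hq2 [Hq21 Hsum]]]];
    [apply Rmin_glb_lt; lra |].
  pose proof (Rmin_l q0 del). pose proof (Rmin_r q0 del).
  exists i, k, n, q1, q2. fold j. do 3 (split; [lra |]).
  split; [repeat split | exact Hzn].
  - pose proof (d_triangle j g one). rewrite (d_sym j g) in *. lra.
  - intros w Hw. apply Hball.
    pose proof (HKin w Hw). pose proof (eY_triangle (act g z) (act j z) w). lra.
  - intros h w Hh Hw. apply HinK, Hconj; [lra | exact (Hn w Hw)].
Qed.

Lemma coded_t_near_or_far s q0 q1 q2 m n z eps : 0 < eps -> eps < qr q1 ->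
  dist_into (coded (s ++ [q0; q1; q2; Q0; natQ m; natQ n])) z < qr q1 - eps \/
  dist_into (coded s) z <= qr q0 + eps.
Proof.
  intros Heps Hq1. rewrite coded_t.
  destruct (Rle_dec (dist_into (coded s) z) (qr q0 + eps)) as [| Hfar]; [right; lra | left].
  apply Rnot_le_lt in Hfar.
  pose proof (dist_into_member _ _ (t_set_of_far (coded s) (cball_code (snd (of_nat m)))
                (ball_code n) (qr q0) (qr q1 + qr q2) (gseq (fst (of_nat m))) z ltac:(lra))).
  lra.
Qed.

Lemma coded_u_or_t_far s q0 q1 q2 m n z eps : qr q2 + eps <= 1 -> qr q1 - eps <= 1 ->
  dist_into (coded (s ++ [q0; q1; q2; Q1; natQ m; natQ n])) z >= qr q2 + eps \/
  dist_into (coded (s ++ [q0; q1; q2; Q0; natQ m; natQ n])) z >= qr q1 - eps.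
Proof.
  intros Hq2 Hq1. rewrite coded_u, coded_t.
  apply NNPP. intro Hneither.
  apply (u_set_t_set_not_both_near (coded s) (cball_code (snd (of_nat m)))
           (ball_code n) (qr q0) (qr q1 + qr q2) (gseq (fst (of_nat m)))
           z (qr q2 + eps) (qr q1 - eps)); [lra | lra | lra |].
  split; apply Rnot_le_lt; intro; apply Hneither; [left | right]; lra.
Qed.

Lemma coded_u_member s q0 z : qr q0 <= 1 -> dist_into (coded s) z < qr q0 ->
  exists q1 q2 m n, 0 < qr q2 /\ qr q2 < qr q1 /\ qr q1 < qr q0 /\
    coded (s ++ [q0; q1; q2; Q1; natQ m; natQ n]) z.
Proof.
  intros Hq0 Hz.
  destruct (u_set_reaching (coded s) z (qr q0) (coded_open s) Hq0 Hz)
    as [i [k [n [q1 [q2 [Hq2 [Hq21 [Hq10 Hu]]]]]]]].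
  exists q1, q2, (to_nat (i, k)), n.
  rewrite coded_u, cancel_of_to. auto.
Qed.

Definition embed (y : Y) : qfamily G := fun s g0 => dist_into (coded s) (act g0 y).

Lemma embed_in_X (G0 : G -> Prop) y : in_X d G0 (embed y).
Proof.
  unfold in_X, embed. split; [| split; [| split]].
  - intro s. split; [intro g; split; [apply dist_into_ge0 | apply dist_into_le1] |].
    intros g1 g2. apply Rabs_le.
    pose proof (dist_into_act_le (coded s) y g1 g2).
    pose proof (dist_into_act_le (coded s) y g2 g1). rewrite (d_sym g2 g1) in *. lra.
  - intros s g0 m n q0 q1 q2 eps _ _ _ _ [Heps _] _ _ [Hq1 _] _ _ _.
    apply coded_t_near_or_far; lra.
  - intros s g0 m n q0 q1 q2 eps _ _ _ _ _ _ _ [_ Hq1] _ _ [_ Hq2].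
    apply coded_u_or_t_far; lra.
  - intros s g0 q0 eps HG0 [_ Hq0] [Heps _] Hlt.
    destruct (coded_u_member s q0 (act g0 y) (Rlt_le _ _ Hq0) Hlt)
      as [q1 [q2 [m [n [Hq2 [Hq21 [Hq10 Hu]]]]]]].
    exists q1, q2, g0, m, n. rewrite d_refl.
    pose proof (dist_into_member _ _ Hu).
    repeat split; auto; lra.
Qed.

Lemma embed_act g y : embed (act g y) = fam_act mul g (embed y).
Proof.
  unfold fam_act, embed.
  apply functional_extensionality. intro s. apply functional_extensionality. intro g0.
  rewrite act_mul. reflexivity.
Qed.

Lemma subbasic_list_embed_stable y l : subbasic_list (embed y) l ->
  exists r, 0 < r /\ forall y', eY y y' < r -> subbasic_list (embed y') l.
Proof.
  induction l as [| [[s g0] q] l IH]; intro Hl.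
  - exists 1. split; [lra |]. intros y' _ s g0 q0 [].
  - destruct (dist_into_act_usc (coded s) g0 y (qr q) (coded_open s)) as [r1 [Hr1 H1]];
      [apply Hl; left; reflexivity |].
    destruct IH as [r2 [Hr2 H2]]; [intros s' g' q' Hin; apply Hl; right; exact Hin |].
    exists (Rmin r1 r2). split; [apply Rmin_glb_lt; assumption |].
    pose proof (Rmin_l r1 r2). pose proof (Rmin_r r1 r2).
    intros y' Hy' s' g' q' [E | Hin].
    + injection E as <- <- <-. apply H1. lra.
    + apply (H2 y'); [lra | exact Hin].
Qed.

Lemma embed_continuous (G0 : G -> Prop) O :
  tau_open d G0 O -> metric_open eY (fun y => O (embed y)).
Proof.
  intros [_ HO] y Hy. destruct (HO _ Hy) as [l [_ [Hl Hsub]]].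
  destruct (subbasic_list_embed_stable y l Hl) as [r [Hr Hstable]].
  exists r. split; [exact Hr |]. intros y' Hy'.
  apply Hsub; [apply embed_in_X | exact (Hstable y' Hy')].
Qed.

(* If k·y' lies in a small ball around y with d(k,1) small, then y' = k⁻¹·(k·y')
   is close to y. *)
Lemma ball_code_separating U y : metric_open eY U -> U y ->
  exists n (q : Qc), 0 < qr q /\ qr q <= 1 /\ ball_code n y /\
    forall y', dist_into (ball_code n) y' < qr q -> U y'.
Proof.
  intros HU Hy. destruct (HU y Hy) as [eta [Heta Hball]].
  destruct (act_continuous one y eta Heta) as [del [Hdel Hc]].
  destruct (ball_code_shrinking y del Hdel) as [n [Hyn Hn]].
  destruct (exists_inv_S_lt del Hdel) as [e He].
  exists n, (qinv e). rewrite qr_qinv.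
  split; [apply inv_S_pos | split; [apply inv_S_le1 | split; [exact Hyn |]]].
  intros y' Hy'. destruct (dist_into_lt _ _ _ Hy' (inv_S_le1 e)) as [k [Hk Hdk]].
  apply Hball.
  replace (eY y y') with (eY (act one y) (act (inv k) (act k y')))
    by (rewrite act_one, <- act_mul, mul_Vl, act_one; reflexivity).
  apply Hc; [| exact (Hn _ Hk)].
  rewrite d_sym, (d_one_of_mul_eq _ _ _ (mul_Vl k)), d_sym. lra.
Qed.

Lemma embed_open (G0 : G -> Prop) U : G0 one -> metric_open eY U ->
  exists O, tau_open d G0 O /\ forall y, U y <-> O (embed y).
Proof.
  intros HG0 HU.
  exists (fun f => in_X d G0 f /\ exists l, (forall s g0 q0, In (s, g0, q0) l -> G0 g0) /\
            subbasic_list f l /\ forall y', subbasic_list (embed y') l -> U y').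
  split.
  - split; [intros f [Hf _]; exact Hf |].
    intros f [Hf [l [HG0l [Hl HU']]]]. exists l.
    split; [exact HG0l | split; [exact Hl |]].
    intros f' Hf' Hl'. split; [exact Hf' | exists l; auto].
  - intro y. split.
    + intro Hy. split; [apply embed_in_X |].
      destruct (ball_code_separating U y HU Hy) as [n [q [Hq [Hq1 [Hyn Hsep]]]]].
      exists [([natQ n], one, q)].
      split; [| split].
      * intros s g0 q0 [E | []]. injection E as _ <- _. exact HG0.
      * intros s g0 q0 [E | []]. injection E as <- <- <-. unfold embed.
        rewrite coded_singleton, act_one.
        pose proof (dist_into_member _ _ Hyn). lra.
      * intros y' Hl'. apply Hsep.
        specialize (Hl' [natQ n] one q (or_introl eq_refl)).
        unfold embed in Hl'. rewrite coded_singleton, act_one in Hl'. exact Hl'.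
    + intros [_ [l [_ [Hl HlU]]]]. exact (HlU y Hl).
Qed.

Lemma point_compl_open z : metric_open eY (fun y => y <> z).
Proof.
  intros y Hy. exists (eY y z). split.
  - destruct (Rle_lt_or_eq_dec _ _ (eY_ge0 y z)) as [| E]; [assumption |].
    symmetry in E. destruct (Hy (eY_eq _ _ E)).
  - intros y' Hy' <-. lra.
Qed.

Lemma embed_injective (G0 : G -> Prop) y1 y2 : G0 one -> embed y1 = embed y2 -> y1 = y2.
Proof.
  intros HG0 E. apply NNPP. intro Hne.
  destruct (embed_open G0 _ HG0 (point_compl_open y2)) as [O [_ HO]].
  apply (proj2 (HO y2)); [| reflexivity].
  rewrite <- E. apply HO. exact Hne.
Qed.

End Embedding.

Theorem lemma2p13
  (G : Type) (mul : G -> G -> G) (inv : G -> G) (one : G)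
  (d : G -> G -> R) (G0 : G -> Prop)
  (Hgrp : is_group mul inv one)
  (Hd : is_metric d) (Hpolish : polish_topology d)
  (Htop : topological_group d mul inv)
  (Hright : right_invariant d mul) (Hbd : bounded_by_one d)
  (HG0sub : subgroup mul inv one G0) (HG0count : countable_set G0)
  (HG0dense : dense_set d G0)
  (Y : Type) (eY : Y -> Y -> R) (HY : polish_topology eY)
  (act : G -> Y -> Y) (Hact : continuous_action d eY mul one act) :
  exists pi : Y -> qfamily G,
    (forall y, in_X d G0 (pi y)) /\
    (forall O, tau_open d G0 O -> metric_open eY (fun y => O (pi y))) /\
    (forall y1 y2, pi y1 = pi y2 -> y1 = y2) /\
    (forall g y, pi (act g y) = fam_act mul g (pi y)) /\
    (forall U, metric_open eY U ->
       exists O, tau_open d G0 O /\ forall y, U y <-> O (pi y)).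
Proof.
  destruct Hgrp as (mul_assoc & mul_1l & mul_1r & mul_Vl & _).
  destruct Hd as (d_ge0 & d_refl & _ & d_sym & d_triangle).
  destruct Htop as [mul_continuous _].
  destruct HY as [(eY_ge0 & eY_refl & eY_eq & eY_sym & eY_triangle) [[A [[yseq Hyseq] HA]] _]].
  destruct Hact as (act_one & act_mul & act_continuous).
  destruct HG0count as [gopt Hgopt].
  destruct HG0sub as [HG0one _].
  set (gseq i := match gopt i with Some g => g | None => one end).
  assert (gseq_dense : forall g r, 0 < r -> exists i, d g (gseq i) < r).
  { intros g r Hr. destruct (HG0dense g r Hr) as [a [Ha Hga]].
    destruct (Hgopt a Ha) as [i Hi]. exists i. unfold gseq. rewrite Hi. exact Hga. }
  assert (yseq_dense : forall y r, 0 < r -> exists c w, yseq c = Some w /\ eY y w < r).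
  { intros y r Hr. destruct (HA y r Hr) as [a [Ha Hya]].
    destruct (Hyseq a Ha) as [c Hc]. eauto. }
  exists (embed G one d Y eY act gseq yseq).
  split; [| split; [| split; [| split]]].
  - intro y. eapply embed_in_X; eauto.
  - intros O HO. eapply embed_continuous; eauto.
  - intros y1 y2. eapply embed_injective; eauto.
  - intros g y. eapply embed_act; eauto.
  - intros U HU. eapply embed_open; eauto.
Qed.
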